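(* Let $X_1,\dots,X_n$ be Polish spaces with Borel probability measures $\mu_i$, let $\mu=\prod_{i=1}^n\mu_i$ on $X=\prod_iX_i$, and let $c:X\to\mathbb{R}$ be Borel measurable with $c\in L^1(X,\mu)$. For $y\in X$ and $\alpha\subseteq\{1,\dots,n\}$ let $c_\alpha(x_\alpha)=c(x_\alpha y_{\{1,\dots,n\}\setminus\alpha})$ on $X_\alpha$. Then there exists $y\in X$ such that for every $\alpha\subseteq\{1,\dots,n\}$ the function $c_\alpha$ is integrable with respect to $\mu_\alpha=\prod_{i\in\alpha}\mu_i$ and $\|c_\alpha\|_{L^1(\mu_\alpha)}\le 2^{n+1}\|c\|_{L^1(\mu)}$ (for $\alpha=\varnothing$ this means $|c(y)|\le2^{n+1}\|c\|_{L^1(\mu)}$).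
   Context: $X_\alpha=\prod_{i\in\alpha}X_i$; for disjoint $\alpha,\beta$, $x_\alpha y_\beta$ denotes the point of $X_{\alpha\sqcup\beta}$ whose coordinates are taken from $x_\alpha$ and $y_\beta$. *)

From HB Require Import structures.
From mathcomp Require Import all_boot all_order all_algebra.
From mathcomp Require Import all_classical all_reals all_analysis.
Set Implicit Arguments. Unset Strict Implicit. Unset Printing Implicit Defensive.
Import Order.TTheory GRing.Theory Num.Theory.
(* Product topology on dependent function types (as in ArrowAsProduct),
   declared here for pointed factors so that the product is a ptopologicalType. *)
HB.instance Definition _ (U : Type) (T : U -> ptopologicalType) :=
  Topological.copy (forall x : U, T x) (prod_topology T).
Local Open Scope classical_set_scope.
Local Open Scope ring_scope.

(* A Polish space, presented (as usual) together with a compatible complete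
   metric: a complete (pseudo)metric space which is Hausdorff (so the
   pseudometric is a metric) and separable. *)
Definition polish_space (R : realType) (T : completePseudoMetricType R) : Prop :=
  hausdorff_space T /\ exists S : set T, countable S /\ dense S.

Definition borel (T : ptopologicalType) := g_sigma_algebraType (@open T).

(* nu is (the) product measure of the family mu on the Borel sets of the
   product space forall i, X i: it gives measure prod_i mu_i(A_i) to every
   Borel rectangle. (For finitely many Polish factors, Borel(prod) is the
   product sigma-algebra, so such a measure exists and is unique.) *)
Definition is_product_measure (R : realType) (I : finType)
  (X : I -> ptopologicalType)
  (nu : set (borel (forall i, X i)) -> \bar R)
  (mu : forall i, set (borel (X i)) -> \bar R) : Prop :=
  forall A : forall i, set (borel (X i)),
    (forall i, measurable (A i)) ->
    nu [set x | forall i, A i (x i)] = (\prod_(i : I) mu i (A i))%E.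

(* x_alpha y_{complement of alpha}: the point of prod_i X i whose coordinates
   in alpha come from x and the others from y. *)
Definition glue_pt (n : nat) (X : 'I_n -> Type) (alpha : {set 'I_n})
  (x : forall i : {i : 'I_n | i \in alpha}, X (sval i)) (y : forall i, X i)
  : forall i, X i :=
  fun i => (if i \in alpha as b return (i \in alpha = b -> X i)
            then fun h => x (exist _ i h) else fun _ => y i) erefl.

From HB Require Import structures.
From mathcomp Require Import all_boot all_order all_algebra.
From mathcomp Require Import all_classical all_reals all_analysis.
From mathcomp Require Import lra measurable_realfun.
Import Order.TTheory GRing.Theory Num.Theory.
Local Open Scope classical_set_scope.
Local Open Scope ring_scope.

(* For a set
   of coordinates al, the section of c at y is x_al |-> c (x_al y_{~al}); its
   L^1 norm N_al(y) equals int |c (mix_al (x, y))| dmu(x), where mix_al (x, y)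
   takes the al-coordinates from x and the others from y.  If x and y are
   independent mu-samples then so is mix_al (x, y), hence by Fubini
   int N_al dmu = ||c||_1 and int (sum_al N_al) dmu = 2^n ||c||_1.  A
   nonnegative function of finite mean m on a probability space is <= 2m at
   some point, which gives a y with N_al(y) <= 2^(n+1) ||c||_1 for all al. *)

Lemma continuous_borel_measurable {T U : ptopologicalType} {f : T -> U} :
  continuous f -> measurable_fun [set: borel T] (f : borel T -> borel U).
Proof.
move=> cf; apply: (@measurability _ _ (borel T) (borel U) setT f (@open U)) => //.
move=> _ [B oB <-].
by apply: sub_sigma_algebra; rewrite setTI; exact: open_comp (fun x _ => cf x) oB.
Qed.

Section rectangles.
Context {I : finType} {Y : I -> ptopologicalType}.
Local Notation P := (forall i, Y i).

Definition rect (A : forall i, set (Y i)) : set P := [set x | forall i, A i (x i)].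

Lemma rectI (A B : forall i, set (Y i)) :
  rect A `&` rect B = rect (fun i => A i `&` B i).
Proof.
apply/seteqP; split=> x /=; first by case=> hA hB i; split.
by move=> h; split=> i; case: (h i).
Qed.

(* Rectangles with Borel sides are Borel, being finite intersections of
   preimages under the continuous coordinate projections. *)
Lemma rect_measurable (A : forall i, set (Y i)) :
  (forall i, measurable (A i : set (borel (Y i)))) ->
  measurable (rect A : set (borel P)).
Proof.
move=> mA; have -> : rect A = \bigcap_(i in setT) ((fun x : P => x i) @^-1` A i).
  by apply/seteqP; split=> x /= h i => [_|]; exact: h.
apply: fin_bigcap_measurable; first exact: finite_finset.
move=> i _; rewrite -[X in measurable X]setTI.
by apply: (continuous_borel_measurable (@proj_continuous _ _ i)) => //; exact: mA.
Qed.

Lemma nbhs_rect {x : P} {O : set P} : nbhs x O ->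
  exists U : forall i, set (Y i), (forall i, nbhs (x i) (U i)) /\ rect U `<=` O.
Proof.
pose F := filter_from [set U : forall i, set (Y i) | forall i, nbhs (x i) (U i)] rect.
have F_filter : Filter F.
  apply: filter_from_filter; first by exists (fun i => setT) => i; exact: filterT.
  move=> U V HU HV; exists (fun i => U i `&` V i); first by move=> i; apply: filterI.
  by rewrite rectI.
have Fx : F --> (x : product_topology_def Y).
  apply/cvg_sup => i A /=.
  rewrite (@nbhsE (initial_topology (fun f : P => f i))) => -[B [[C oC CB] Bx] BA].
  exists (fun j => (fun y => dfwith x j y i) @^-1` C).
    move=> j; apply: open_nbhs_nbhs; split.
      apply: open_comp => // y _.
      apply: (@continuous_comp _ P _ (dfwith x j) (fun f : P => f i)).
        exact: dfwith_continuous.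
      exact: proj_continuous.
    rewrite /= (_ : dfwith x j (x j) = x); first by rewrite -CB in Bx.
    by apply: functional_extensionality_dep => k; case: dfwithP.
  by move=> f /= /(_ i) /=; rewrite dfwithin => Cf; apply: BA; rewrite -CB.
by move=> xO; have [U HU HO] := Fx O xO; exists U.
Qed.

End rectangles.

Lemma separable_dense_sequence {R : realType} {T : pseudoPMetricType R} :
  (exists S : set T, countable S /\ dense S) ->
  exists e : nat -> T, forall (x : T) (r : R), 0 < r -> exists m, ball x r (e m).
Proof.
case=> S [/pcard_surjP [g gS] dS]; exists g => x r r0.
have [z [zi Sz]] : ((ball x r)° `&` S) !=set0.
  apply: dS; last exact: open_interior.
  by exists x; apply: nbhs_singleton; apply: nbhs_interior; exact: nbhsx_ballx.
by have [m _ gm] := gS z Sz; exists m; rewrite gm; exact: interior_subset.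
Qed.

Section countable_base.
Context {R : realType} {T : pseudoPMetricType R} (e : nat -> T).
Hypothesis e_dense : forall (x : T) (r : R), 0 < r -> exists m, ball x r (e m).

(* The interiors of the balls of radius 1/(k+1) centred at the points e m:
   a countable base of the topology. *)
Definition basic_ball (p : nat * nat) : set T := (ball (e p.1) p.2.+1%:R^-1)°.

Lemma nbhs_basic_ball {x : T} {U : set T} : nbhs x U ->
  exists p, basic_ball p x /\ basic_ball p `<=` U.
Proof.
move=> /nbhs_ballP [r r0 rU].
have [k _ kr] : exists2 k : nat, True & k.+1%:R^-1 < r / 2.
  have [N _ hN] := near_infty_natSinv_lt (PosNum (divr_gt0 r0 (ltr0n R 2))).
  by exists N => //; apply: hN => /=.
set s : R := k.+1%:R^-1; have s0 : 0 < s by rewrite invr_gt0.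
have [m hm] := e_dense x (s / 2) (divr_gt0 s0 (ltr0n R 2)).
exists (m, k); split.
  apply/nbhs_ballP; exists (s / 2) => [/=|z xz]; first by rewrite divr_gt0.
  by rewrite /= -/s (splitr s); apply: ball_triangle xz; exact: ball_sym.
move=> z /interior_subset mz; apply: rU.
apply: (@le_ball _ _ _ (s / 2 + s)); first by move: kr; rewrite -/s; lra.
exact: ball_triangle hm mz.
Qed.

End countable_base.

Section separable_products.
Context {R : realType} {I : finType} {Y : I -> pseudoPMetricType R}.
Hypothesis Y_separable : forall i, exists S : set (Y i), countable S /\ dense S.
Local Notation P := (forall i, Y i).

Let dseq i : nat -> Y i := sval (cid (separable_dense_sequence (Y_separable i))).
Let dseq_dense i : forall (x : Y i) (r : R), 0 < r -> exists m, ball x r (dseq i m) :=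
  svalP (cid (separable_dense_sequence (Y_separable i))).

Let box (u : {ffun I -> nat * nat}) : set P :=
  rect (fun i => basic_ball (dseq i) (u i)).

Let open_bigcup_box {O : set P} : open O ->
  O = \bigcup_(u in [set u | box u `<=` O]) box u.
Proof.
move=> oO; apply/seteqP; split => [x Ox|x [u uO]]; last exact: uO.
have [U [xU UO]] := nbhs_rect (open_nbhs_nbhs (conj oO Ox)).
have /choice [p hp] : forall i, exists p,
    basic_ball (dseq i) p (x i) /\ basic_ball (dseq i) p `<=` U i.
  by move=> i; apply: (nbhs_basic_ball _ (dseq_dense i) (xU i)).
exists [ffun i => p i] => [y /= yb|]; last by move=> i; rewrite ffunE; case: (hp i).
by apply: UO => i; case: (hp i) => _; apply; have := yb i; rewrite ffunE.
Qed.

Definition measurable_rects : set (set P) :=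
  [set rect A | A in [set A | forall i, measurable (A i : set (borel (Y i)))]].

Lemma borel_rectE : @measurable _ (borel P) = <<s measurable_rects >>.
Proof.
apply/seteqP; split; last first.
  apply: smallest_sub; first exact: (sigma_algebra_measurable (borel P)).
  by move=> _ [A mA <-]; exact: rect_measurable.
apply: smallest_sub; first exact: smallest_sigma_algebra.
move=> O oO; rewrite (open_bigcup_box oO) bigcup_mkcond.
apply: (@countable_bigcupT_measurable _ (g_sigma_algebraType measurable_rects)).
  exact: countableP.
move=> u; case: ifP => _; last exact: (@measurable0 _ (g_sigma_algebraType _)).
apply: sub_sigma_algebra; exists (fun i => basic_ball (dseq i) (u i)) => //= i.
by apply: sub_sigma_algebra; exact: open_interior.
Qed.

Lemma measurable_fun_rect {d} {T : measurableType d} {f : T -> borel P} :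
  (forall A : forall i, set (Y i), (forall i, measurable (A i : set (borel (Y i)))) ->
     measurable (f @^-1` rect A)) ->
  measurable_fun [set: T] f.
Proof.
move=> hf; apply: (measurability _ borel_rectE) => _ [_ [A mA <-] <-].
by rewrite setTI; exact: hf.
Qed.

(* A finite measure on the product is determined by its values on
   rectangles, which form a pi-system generating the Borel sets. *)
Lemma rect_measure_unique (m1 m2 : {measure set (borel P) -> \bar R}) :
  (m1 [set: P] < +oo)%E ->
  (forall A : forall i, set (Y i), (forall i, measurable (A i : set (borel (Y i)))) ->
     m1 (rect A) = m2 (rect A)) ->
  forall B : set (borel P), measurable B -> m1 B = m2 B.
Proof.
move=> m1fin m12 B mB.
apply: (@measure_unique _ R (borel P) measurable_rects (fun=> setT) borel_rectE) => //.
- move=> _ _ [A mA <-] [A' mA' <-]; rewrite rectI.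
  by exists (fun i => A i `&` A' i) => // i; exact: measurableI.
- by move=> _; exists (fun=> setT) => //; apply/seteqP; split.
- by apply/seteqP; split => // x _; exists 0%N.
- by move=> _ [A mA <-]; exact: m12.
Qed.

End separable_products.

Section selection.
Local Open Scope ereal_scope.

(* A nonnegative function with finite mean m on a probability space takes a
   value at most 2m somewhere: if m = 0 the function vanishes almost
   everywhere, and otherwise Markov's inequality bounds the probability of
   [H >= 2m] by 1/2. *)
Lemma exists_le_twice_integral {d} {T : measurableType d} {R : realType}
  (P : probability T R) (H : T -> \bar R) :
  measurable_fun [set: T] H -> (forall y, 0 <= H y) ->
  \int[P]_y H y < +oo ->
  exists y, H y <= 2%:E * \int[P]_y H y.
Proof.
move=> mH H0 Hfin; apply: contrapT => /forallNP Hbig.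
have {}Hbig y : 2%:E * \int[P]_y H y < H y by rewrite ltNge; apply/negP/Hbig.
have absH : \int[P]_y `|H y| = \int[P]_y H y.
  by apply: eq_integral => y _; rewrite gee0_abs.
have m0 : 0 <= \int[P]_y H y by exact: integral_ge0.
have [mE|mpos] := eqVneq (\int[P]_y H y) 0.
- have [N [mN PN0 HN]] := (ae_eq_integral_abs P measurableT mH).1 (etrans absH mE).
  suff : P setT = 0 by rewrite (probability_setT P) => -[] /eqP; rewrite oner_eq0.
  apply: (subset_measure0 _ _ _ PN0) => // y _; apply: HN => /= Hy0.
  by have := Hbig y; rewrite mE mule0 Hy0 // ltxx.
- have mfin : \int[P]_y H y \is a fin_num by rewrite ge0_fin_numE.
  set r := fine (\int[P]_y H y).
  have mr : \int[P]_y H y = r%:E by rewrite /r fineK.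
  have r0 : (0 < r)%R by rewrite -lte_fin -mr lt0e mpos.
  have := le_integral_abse P measurableT mH (mulr_gt0 (ltr0n R 2) r0).
  rewrite (_ : setT `&` _ = setT); last first.
    apply/seteqP; split => // y _; split => //=.
    by rewrite gee0_abs // ltW // EFinM -mr.
  have P1 : (P : {measure set T -> \bar R}) [set: T] = 1 := probability_setT P.
  by rewrite P1 mule1 absH mr lee_fin; lra.
Qed.

End selection.

(* The image measure of m under a measurable map f.  The library's measure
   structure on pushforward m f depends on the proof mf, so it is named here
   to be usable as a measure. *)
Definition image_measure {d d'} {T1 : measurableType d} {T2 : measurableType d'}
  {R : realType} (m : {measure set T1 -> \bar R}) {f : T1 -> T2}
  (mf : measurable_fun [set: T1] f) : {measure set T2 -> \bar R} :=
  @measure_function_pushforward__canonical__measure_function_Measure _ _ _ _ _ m f mf.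

Lemma ge0_integral_image {d d'} {T1 : measurableType d} {T2 : measurableType d'}
  {R : realType} (m : {measure set T1 -> \bar R}) {f : T1 -> T2}
  (mf : measurable_fun [set: T1] f) {g : T2 -> \bar R} :
  measurable_fun [set: T2] g -> (forall y, 0 <= g y)%E ->
  (\int[image_measure m mf]_y g y = \int[m]_x g (f x))%E.
Proof.
by move=> mg g0; rewrite (ge0_integral_pushforward mf).
Qed.

Section coordinates.
Context {n : nat} {X : 'I_n -> Type}.
Local Notation P := (forall i, X i).
Local Notation Q al := (forall j : {i : 'I_n | i \in al}, X (sval j)).

Definition mix (al : {set 'I_n}) (p : P * P) : P :=
  fun i => if i \in al then p.1 i else p.2 i.

Definition coord_restrict (al : {set 'I_n}) (x : P) : Q al := fun j => x (sval j).

Lemma glue_in {al : {set 'I_n}} (x : Q al) (y : P) {i} (h : i \in al) :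
  glue_pt x y i = x (exist _ i h).
Proof.
suff gen b (e : (i \in al) = b) : (if b as b' return ((i \in al) = b' -> X i)
    then fun h' => x (exist _ i h') else fun _ => y i) e = x (exist _ i h).
  exact: gen.
by case: b e => e; [rewrite (bool_irrelevance e h)|exfalso; rewrite e in h].
Qed.

Lemma glue_out {al : {set 'I_n}} (x : Q al) (y : P) {i} : i \notin al ->
  glue_pt x y i = y i.
Proof.
move=> hi; suff gen b (e : (i \in al) = b) : (if b as b' return ((i \in al) = b' -> X i)
    then fun h' => x (exist _ i h') else fun _ => y i) e = y i.
  exact: gen.
by case: b e => e //; move: hi; rewrite e.
Qed.

Lemma glue_coord_restrict (al : {set 'I_n}) (x y : P) :
  glue_pt (coord_restrict al x) y = mix al (x, y).
Proof.
apply: functional_extensionality_dep => i; rewrite /mix /=.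
by case: (boolP (i \in al)) => hi; rewrite ?(glue_in _ _ hi) ?glue_out.
Qed.

End coordinates.

(* Preimages of rectangles under the coordinate maps are rectangles (or
   intersections of a rectangle with a set that is empty or full), so these
   maps are Borel measurable. *)
Section measurable_coordinates.
Context {R : realType} {n : nat} {X : 'I_n -> pseudoPMetricType R}.
Hypothesis X_separable : forall i, exists S : set (X i), countable S /\ dense S.
Local Notation P := (forall i, X i).
Local Notation Q al := (forall j : {i : 'I_n | i \in al}, X (sval j)).
Local Notation Q_sides al := (forall j : {i : 'I_n | i \in al}, set (X (sval j))).

Let Q_separable (al : {set 'I_n}) (j : {i : 'I_n | i \in al}) :
  exists S : set (X (sval j)), countable S /\ dense S := X_separable (sval j).

(* The side in direction i of the preimage of rect A under coord_restrict al. *)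
Definition lift_side {al : {set 'I_n}} (A : Q_sides al) (i : 'I_n) : set (X i) :=
  [set z : X i | forall h : i \in al, A (exist _ i h) z].

Lemma lift_side_in {al : {set 'I_n}} (A : Q_sides al) {i} (h : i \in al) :
  lift_side A i = A (exist _ i h).
Proof.
apply/seteqP; split => z /=; first exact.
by move=> Az h'; rewrite (bool_irrelevance h' h).
Qed.

Lemma lift_side_out {al : {set 'I_n}} (A : Q_sides al) {i} :
  i \notin al -> lift_side A i = setT.
Proof. by move=> hi; apply/seteqP; split => // z _ h; rewrite h in hi. Qed.

Lemma coord_restrict_preimage (al : {set 'I_n}) (A : Q_sides al) :
  coord_restrict al @^-1` rect A = rect (lift_side A).
Proof.
apply/seteqP; split => x /=; first by move=> h i hi; exact: (h (exist _ i hi)).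
by move=> h -[i hi]; exact: h.
Qed.

Lemma coord_restrict_measurable (al : {set 'I_n}) :
  measurable_fun [set: borel P] (coord_restrict al : borel P -> borel (Q al)).
Proof.
apply: (measurable_fun_rect (@Q_separable al)) => A mA.
rewrite coord_restrict_preimage; apply: rect_measurable => i.
have [hi|hi] := boolP (i \in al); last by rewrite lift_side_out.
by rewrite (lift_side_in _ hi); exact: (mA (exist _ i hi)).
Qed.

Lemma mix_preimage (al : {set 'I_n}) (B : forall i, set (X i)) :
  mix al @^-1` rect B =
  rect (fun i => if i \in al then B i else setT) `*`
  rect (fun i => if i \in al then setT else B i).
Proof.
apply/seteqP; split => [[x y] h|[x y] [hx hy] i]; last first.
  by have := hx i; have := hy i; rewrite /mix /=; case: (i \in al).
by split => i; have := h i; rewrite /mix /=; case: (i \in al).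
Qed.

Lemma mix_measurable (al : {set 'I_n}) :
  measurable_fun [set: borel P * borel P] (mix al : borel P * borel P -> borel P).
Proof.
apply: (measurable_fun_rect X_separable) => B mB.
by rewrite mix_preimage; apply: measurableX; apply: rect_measurable => i;
  case: (i \in al).
Qed.

Lemma glue_measurable (al : {set 'I_n}) (y : P) :
  measurable_fun [set: borel (Q al)] (fun x : borel (Q al) => glue_pt x y : borel P).
Proof.
apply: (measurable_fun_rect X_separable) => A mA.
have -> : (fun x : Q al => glue_pt x y) @^-1` rect A =
    rect (fun j : {i : 'I_n | i \in al} => A (sval j)) `&`
    [set _ | forall i, i \notin al -> A i (y i)].
  apply/seteqP; split => x /=.
    move=> h; split => [[i hi]|i hi]; have := h i.
      by rewrite (glue_in _ _ hi).
    by rewrite glue_out.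
  move=> [hin hout] i; have [hi|hi] := boolP (i \in al).
    by rewrite (glue_in _ _ hi); exact: (hin (exist _ i hi)).
  by rewrite glue_out //; exact: hout.
apply: measurableI; first by apply: rect_measurable => j; exact: mA.
have [yA|yA] := pselect (forall i, i \notin al -> A i (y i)).
  by rewrite (_ : [set _ | _] = setT) //; apply/seteqP; split.
by rewrite (_ : [set _ | _] = set0) //; apply/seteqP; split.
Qed.

End measurable_coordinates.

Section product_measures.
Context {R : realType} {n : nat} {X : 'I_n -> pseudoPMetricType R}.
Hypothesis X_separable : forall i, exists S : set (X i), countable S /\ dense S.
Context {mu : forall i, probability (borel (X i)) R}.
Context {muX : {measure set (borel (forall i, X i)) -> \bar R}}.
Hypothesis HmuX : is_product_measure muX (fun i => mu i).
Local Notation P := (forall i, X i).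
Local Notation Q al := (forall j : {i : 'I_n | i \in al}, X (sval j)).

Let Q_separable (al : {set 'I_n}) (j : {i : 'I_n | i \in al}) :
  exists S : set (X (sval j)), countable S /\ dense S := X_separable (sval j).

Lemma muX_setT : muX setT = 1%E.
Proof.
rewrite (_ : setT = rect (fun i => setT)); last by apply/seteqP; split.
by rewrite HmuX // big1 // => i _; exact: probability_setT.
Qed.

(* The marginal of muX on the coordinates in al is the product of the
   mu (sval j): both are probability measures with the same values on
   rectangles. *)
Lemma product_measure_marginal (al : {set 'I_n})
  (nu : {measure set (borel (Q al)) -> \bar R}) :
  is_product_measure nu (fun j => mu (sval j)) ->
  forall B, measurable B ->
    nu B = image_measure muX (coord_restrict_measurable X_separable al) B.
Proof.
move=> Hnu; apply: (rect_measure_unique (@Q_separable al)).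
  rewrite (_ : setT = rect (fun j => setT)); last by apply/seteqP; split.
  by rewrite Hnu // big1 ?ltry // => j _; exact: probability_setT.
move=> A mA; rewrite Hnu // /= /pushforward coord_restrict_preimage HmuX; last first.
  move=> i; have [hi|hi] := boolP (i \in al); last by rewrite lift_side_out.
  by rewrite (lift_side_in _ hi); exact: (mA (exist _ i hi)).
rewrite (bigID (fun i => i \in al)) /= [X in (_ * X)%E]big1 ?mule1; last first.
  by move=> i hi; rewrite lift_side_out // probability_setT.
by rewrite [RHS]big_sub; apply: eq_bigr => -[i hi] _ /=; rewrite (lift_side_in _ hi).
Qed.

Lemma integral_marginal {al : {set 'I_n}}
  {nu : {measure set (borel (Q al)) -> \bar R}} :
  is_product_measure nu (fun j => mu (sval j)) ->
  forall g : borel (Q al) -> \bar R,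
  measurable_fun [set: borel (Q al)] g -> (forall x, 0 <= g x)%E ->
  (\int[nu]_x g x = \int[muX]_x g (coord_restrict al x))%E.
Proof.
move=> Hnu g mg g0.
rewrite -(ge0_integral_image muX (coord_restrict_measurable X_separable al)) //.
by apply: eq_measure_integral => B mB _; exact: product_measure_marginal.
Qed.

(* muX, viewed as a probability measure (needed for Fubini's theorem). *)
Definition muP : set (borel P) -> \bar R := muX.
HB.instance Definition _ := Measure.copy muP muX.
HB.instance Definition _ := Measure_isProbability.Build _ _ _ muP muX_setT.

Lemma image_mix (al : {set 'I_n}) (B : set (borel P)) : measurable B ->
  image_measure (muP \x muP)%E (mix_measurable X_separable al) B = muX B.
Proof.
apply: (rect_measure_unique X_separable).
  by rewrite /= /pushforward preimage_setT probability_setT ltry.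
move=> A mA; rewrite /= /pushforward mix_preimage.
set Ain := (fun i => if i \in al then A i else setT).
set Aout := (fun i => if i \in al then setT else A i).
have mAin i : measurable (Ain i : set (borel (X i))).
  by rewrite /Ain; case: (i \in al).
have mAout i : measurable (Aout i : set (borel (X i))).
  by rewrite /Aout; case: (i \in al).
rewrite product_measure1E; try exact: rect_measurable.
change (muX (rect Ain) * muX (rect Aout) = muX (rect A))%E.
rewrite !HmuX // -big_split /=; apply: eq_bigr => i _.
by rewrite /Ain /Aout; case: (i \in al); rewrite probability_setT ?mule1 ?mul1e.
Qed.

Lemma integral_mix (al : {set 'I_n}) (g : borel P -> \bar R) :
  measurable_fun [set: borel P] g -> (forall x, 0 <= g x)%E ->
  (\int[muX]_y \int[muX]_x g (mix al (x, y)) = \int[muX]_x g x)%E.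
Proof.
move=> mg g0; have mgm := measurableT_comp mg (mix_measurable X_separable al).
rewrite -(fubini_tonelli2 (m1 := muP) (m2 := muP) _ mgm (fun p => g0 (mix al p))).
rewrite -(ge0_integral_image (muP \x muP)%E (mix_measurable X_separable al)) //.
by apply: eq_measure_integral => B mB _; exact: image_mix.
Qed.

Lemma measurable_integral_mix (al : {set 'I_n}) (g : borel P -> \bar R) :
  measurable_fun [set: borel P] g -> (forall x, 0 <= g x)%E ->
  measurable_fun [set: borel P] (fun y => \int[muX]_x g (mix al (x, y)))%E.
Proof.
move=> mg g0; have mgm := measurableT_comp mg (mix_measurable X_separable al).
exact: (measurable_fun_fubini_tonelli_G (m1 := muP) _ mgm (fun p => g0 (mix al p))).
Qed.

Context {c : borel P -> R}.
Hypothesis c_meas : measurable_fun [set: borel P] c.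

Let abs_c_measurable : measurable_fun [set: borel P] (fun x => (`|c x|)%:E).
Proof.
by apply/measurable_EFinP; apply: measurableT_comp => //; exact: normr_measurable.
Qed.

(* The L^1(mu_al) norm of the section x_al |-> c (x_al y_{~al}). *)
Definition section_norm (al : {set 'I_n}) (y : P) : \bar R :=
  (\int[muX]_x (`|c (mix al (x, y))|)%:E)%E.

Lemma integral_glue {al : {set 'I_n}} {nu : {measure set (borel (Q al)) -> \bar R}}
  (y : P) : is_product_measure nu (fun j => mu (sval j)) ->
  (\int[nu]_x (`|c (glue_pt x y)|)%:E = section_norm al y)%E.
Proof.
move=> Hnu; rewrite (integral_marginal Hnu); last 2 first.
- exact: measurableT_comp abs_c_measurable (glue_measurable X_separable al y).
- by move=> x; rewrite lee_fin.
by apply: eq_integral => x _; rewrite glue_coord_restrict.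
Qed.

Lemma section_norm_ge0 (al : {set 'I_n}) (y : P) : (0 <= section_norm al y)%E.
Proof. by apply: integral_ge0 => x _; rewrite lee_fin. Qed.

Lemma measurable_section_norm (al : {set 'I_n}) :
  measurable_fun [set: borel P] (section_norm al).
Proof.
by apply: (measurable_integral_mix al _ abs_c_measurable) => x; rewrite lee_fin.
Qed.

Definition sum_section_norms (y : P) : \bar R :=
  (\sum_(al : {set 'I_n}) section_norm al y)%E.

Lemma integral_sum_section_norms :
  (\int[muX]_y sum_section_norms y = (\int[muX]_x (`|c x|)%:E) *+ 2 ^ n)%E.
Proof.
rewrite /sum_section_norms (@ge0_integral_sum _ _ _ muX setT measurableT _ section_norm);
  [|exact: measurable_section_norm|by move=> al y _; exact: section_norm_ge0].
under eq_bigr do rewrite (integral_mix _ _ abs_c_measurable) //.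
by rewrite sumr_const -cardsT -powersetT card_powerset cardsT card_ord.
Qed.

(* A point y at which every section norm is at most 2^(n+1) ||c||_1: apply
   the selection lemma to the sum of the section norms. *)
Lemma exists_good_point : (\int[muX]_x (`|c x|)%:E < +oo)%E ->
  exists y : P, forall al : {set 'I_n},
    (section_norm al y <= (2 ^+ n.+1)%:R%:E * \int[muX]_x (`|c x|)%:E)%E.
Proof.
move=> cfin; have C0 : (0 <= \int[muX]_x (`|c x|)%:E)%E by exact: integral_ge0.
have Cfin : (\int[muX]_x (`|c x|)%:E)%E \is a fin_num by rewrite ge0_fin_numE.
set C := (\int[muX]_x (`|c x|)%:E)%E in C0 Cfin *.
have sum_ge0 y : (0 <= sum_section_norms y)%E.
  by apply: sume_ge0 => al _; exact: section_norm_ge0.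
have sum_fin : (\int[muP]_y sum_section_norms y < +oo)%E.
  by rewrite integral_sum_section_norms -/C -(fineK Cfin) -EFin_natmul ltry.
have [y hy] := exists_le_twice_integral muP sum_section_norms
  (emeasurable_sum _ measurable_section_norm) sum_ge0 sum_fin.
exists y => al; apply: le_trans (le_trans _ hy) _.
  rewrite /sum_section_norms (bigD1 al) //= leeDl //.
  by apply: sume_ge0 => al' _; exact: section_norm_ge0.
rewrite integral_sum_section_norms -/C -(fineK Cfin) -EFin_natmul -!EFinM lee_fin.
by rewrite -[fine C *+ _]mulr_natl mulrA natrXE expnS natrM.
Qed.

End product_measures.

Theorem mainTheorem9 (R : realType) (n : nat)
  (X : 'I_n -> completePseudoMetricType R)
  (HX : forall i, polish_space (X i))
  (mu : forall i, probability (borel (X i)) R)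
  (muX : {measure set (borel (forall i, X i)) -> \bar R})
  (HmuX : is_product_measure muX (fun i => mu i))
  (c : borel (forall i, X i) -> R)
  (c_meas : measurable_fun [set: borel (forall i, X i)] c)
  (c_int : muX.-integrable [set: borel (forall i, X i)] (EFin \o c)) :
  exists y : forall i, X i,
    forall (alpha : {set 'I_n})
      (nu : {measure set (borel (forall i : {i : 'I_n | i \in alpha}, X (sval i)))
               -> \bar R}),
      is_product_measure nu (fun i => mu (sval i)) ->
      nu.-integrable [set: borel (forall i : {i : 'I_n | i \in alpha}, X (sval i))]
        (fun x => (c (glue_pt x y))%:E) /\
      (\int[nu]_x `|c (glue_pt x y)|%:E
         <= ((2 ^+ n.+1)%:R)%:E * \int[muX]_x `|c x|%:E)%E.
Proof.
have X_separable i := (HX i).2.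
have c_fin : (\int[muX]_x (`|c x|)%:E < +oo)%E by case/integrableP: c_int.
have [y y_good] := exists_good_point X_separable HmuX c_meas c_fin.
exists y => al nu Hnu.
have normE := integral_glue X_separable HmuX c_meas y Hnu.
split; last by rewrite normE; exact: y_good.
apply/integrableP; split.
  apply/measurable_EFinP.
  exact: measurableT_comp c_meas (glue_measurable X_separable al y).
by rewrite normE; apply: le_lt_trans (y_good al) _; rewrite lte_mul_pinfty.
Qed.
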